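(* Let $\phi=\frac{1+\sqrt5}{2}$, let $\Gamma\subset SL_2(\mathbb R)$ be the group generated by $$\sigma_0=\begin{pmatrix}1&\phi\\0&1\end{pmatrix},\quad \sigma_1=\begin{pmatrix}\phi&\phi\\1&\phi\end{pmatrix},\quad \sigma_2=\begin{pmatrix}\phi&1\\\phi&\phi\end{pmatrix},\quad \sigma_3=\begin{pmatrix}1&0\\\phi&1\end{pmatrix},$$ and let $S=\{\gamma\binom{1}{0}:\gamma\in\Gamma\}$. For each integer $k>1$ let $$d_k=\begin{pmatrix}k(k+1)+(2k^2+k-2)\phi\\ \phi^2\end{pmatrix},$$ and let $j_k\in\mathbb Z$ be the integer such that $\phi^{-j_k}d_k\in S$ (equivalently, $\gcd_{\Gamma^+}(k(k+1)+(2k^2+k-2)\phi,\ \phi^2)=\phi^{j_k}$). Then for every $m\in\mathbb Z$, the set $\{k>1: j_k=m\}$ is finite.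
   Context: $\Gamma$ acts on $\mathbb R^2$ by matrix multiplication on column vectors. For $x,y\in\mathbb Z[\phi]$ not both zero, $\gcd_{\Gamma^+}(x,y)$ is the positive real $\lambda$ with $\lambda^{-1}\binom{|x|}{|y|}\in S$ (the representative of the gcd produced by the Davis–Lelièvre algorithm). Since the coordinates of $d_k$ are coprime in $\mathbb Z[\phi]$ and the positive units of $\mathbb Z[\phi]$ are the powers of $\phi$, this gcd is of the form $\phi^{j_k}$ for a unique integer $j_k$. *)

From Stdlib Require Import Rdefinitions.
From HB Require Import structures.
From mathcomp Require Import all_boot all_order all_algebra.
From mathcomp Require Import Rstruct.
Set Implicit Arguments. Unset Strict Implicit. Unset Printing Implicit Defensive.
Import Order.TTheory GRing.Theory Num.Theory.
Local Open Scope ring_scope.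

Definition phi : R := (1 + Num.sqrt 5) / 2.

Definition mx2 (a b c d : R) : 'M[R]_2 :=
  \matrix_(i < 2, j < 2)
    if i == 0 then (if j == 0 then a else b) else (if j == 0 then c else d).

Definition cv2 (x y : R) : 'cV[R]_2 := \col_(i < 2) if i == 0 then x else y.

Definition sigma0 : 'M[R]_2 := mx2 1 phi 0 1.
Definition sigma1 : 'M[R]_2 := mx2 phi phi 1 phi.
Definition sigma2 : 'M[R]_2 := mx2 phi 1 phi phi.
Definition sigma3 : 'M[R]_2 := mx2 1 0 phi 1.

Definition is_generator (s : 'M[R]_2) : Prop :=
  s = sigma0 \/ s = sigma1 \/ s = sigma2 \/ s = sigma3.

Inductive inGamma : 'M[R]_2 -> Prop :=
  | inGamma1 : inGamma 1%:M
  | inGammaM : forall s g, is_generator s -> inGamma g -> inGamma (s *m g)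
  | inGammaV : forall s g, is_generator s -> inGamma g -> inGamma (invmx s *m g).

Definition inS (v : 'cV[R]_2) : Prop :=
  exists g, inGamma g /\ v = g *m cv2 1 0.

Definition d (k : nat) : 'cV[R]_2 :=
  cv2 ((k * (k + 1))%N%:R + ((2 * k ^ 2 + k)%N%:R - 2) * phi) (phi ^+ 2).

(* Gamma lies in the Hecke group generated by S = [[0,-1],[1,0]] and
   T = [[1,phi],[0,1]]: sigma0 = T, sigma1 = T S T, sigma3 = S^-1 T^-1 S and
   sigma2 = sigma3 S^-1 sigma3.  Writing elements of that group as reduced words
   in S and U = S T (where S^2 = U^5 = -1) and following the quadrant in which
   the image of (1,0) lies, every point of the orbit of (1,0) has second
   coordinate 0 or of absolute value at least 1.  As the group preserves
   determinants, the same holds for det(p, q) whenever p, q are orbit points.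
   If phi^-m d_k and phi^-m d_l are both in S, shearing the second one by a
   suitable power of T makes this determinant phi^(5-2m) ({l/phi^2} - {k/phi^2}),
   which vanishes only for k = l since phi^2 is irrational.  So the fractional
   parts {k/phi^2} of the admissible k are pairwise at least phi^(2m-5) apart,
   and there are finitely many of them. *)

From Pilot Require Import Defs.
From Stdlib Require Import Rdefinitions Classical_Prop.
From mathcomp Require Import all_boot all_order all_algebra.
From mathcomp Require Import Rstruct.
From mathcomp Require Import ring lra zify.
Set Implicit Arguments. Unset Strict Implicit. Unset Printing Implicit Defensive.
Import Order.TTheory GRing.Theory Num.Theory.
Local Open Scope ring_scope.

(* Stdlib binds [R_scope] to [R], so the real constants in [Defs] are Stdlib's;
   this file reads them in [ring_scope] ([phiE], [sigma_mx2], [dE]). *)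
#[local] Bind Scope ring_scope with R.

Lemma phiE : phi = (1 + Num.sqrt 5) / 2.
Proof. by []. Qed.

Lemma phi_sqr : phi ^+ 2 = phi + 1.
Proof.
have s5 : Num.sqrt 5 ^+ 2 = 5 :> R by rewrite sqr_sqrtr // ler0n.
by rewrite phiE; field: s5.
Qed.

Lemma phi_ge1 : 1 <= phi.
Proof.
have : 1 <= Num.sqrt 5 :> R by rewrite -{1}sqrtr1 ler_sqrt ?ler0n // ?ler1n.
rewrite phiE; lra.
Qed.

Lemma phi_gt0 : 0 < phi.
Proof. by apply: lt_le_trans phi_ge1. Qed.

Lemma sqr_neq_5_mul_sqr (x y : nat) : (0 < y)%N -> (x ^ 2 != 5 * y ^ 2)%N.
Proof.
move=> y_gt0; apply/eqP => eq_sq.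
have := congr1 (logn 5) eq_sq.
rewrite lognM ?expn_gt0 ?y_gt0 // !lognX (@logn_prime 5 5) //.
lia.
Qed.

Lemma intr_add_mul_phi_eq0 (a b : int) : a%:~R + b%:~R * phi = 0 -> b = 0.
Proof.
move=> eq0.
have ea : a%:~R = - (b%:~R * phi) :> R by rewrite -[a%:~R](addrK (b%:~R * phi)) eq0 sub0r.
have sq : (2 * a + b) ^+ 2 = 5 * b ^+ 2.
  apply: (@intr_inj R); rewrite !(intrM, intrD, rmorphXn) /= ea; ring: phi_sqr.
apply/eqP; rewrite -absz_eq0; apply/negPn/negP; rewrite -lt0n => b_gt0.
have /eqP := congr1 absz sq; rewrite abszX abszM abszX.
exact/negP/sqr_neq_5_mul_sqr.
Qed.

Lemma int_mul_phi_sqr_eq (n z : int) : n%:~R * phi ^+ 2 = z%:~R -> n = 0 /\ z = 0.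
Proof.
move=> eq_nz; have n0 : n = 0.
  by apply: (@intr_add_mul_phi_eq0 (n - z)); rewrite rmorphB /= -eq_nz phi_sqr; ring.
by split=> //; apply/eqP; rewrite -(intr_eq0 R) -eq_nz n0 mul0r.
Qed.

Definition Smap (p : R * R) : R * R := (- p.2, p.1).
Definition Umap (p : R * R) : R * R := (- p.2, p.1 + phi * p.2).
Definition negp (p : R * R) : R * R := (- p.1, - p.2).

Lemma negpK : involutive negp.
Proof. by case=> x y; rewrite /negp /= !opprK. Qed.

Lemma Smap_negp p : Smap (negp p) = negp (Smap p).
Proof. by []. Qed.

Lemma iter_Umap_negp k p : iter k Umap (negp p) = negp (iter k Umap p).
Proof.
elim: k => //= k ->; case: (iter k Umap p) => x y.
by rewrite /Umap /negp /=; congr pair; ring.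
Qed.

Lemma iter_Umap x y :
  [/\ iter 1 Umap (x, y) = (- y, x + phi * y),
      iter 2 Umap (x, y) = (- (x + phi * y), phi * x + phi * y),
      iter 3 Umap (x, y) = (- (phi * x + phi * y), phi * x + y)
    & iter 4 Umap (x, y) = (- (phi * x + y), x)].
Proof. by rewrite /= /Umap /=; split; congr pair; ring: phi_sqr. Qed.

Lemma iter5_Umap p : iter 5 Umap p = negp p.
Proof.
case: p => x y; have [_ _ _ U4] := iter_Umap x y.
by rewrite iterS U4 /Umap /negp /=; congr pair; ring.
Qed.

(* Images of [(1, 0)] and [(-1, 0)] under reduced words in [S] and [U = S T],
   which satisfy [S^2 = U^5 = -1]; the index records the last letter:
   [0] for the empty word, [1] for [S], [k.+1] for [U^k]. *)
Inductive reduced : R * R -> nat -> Prop :=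
  | reduced_e1 : reduced (1, 0) 0
  | reduced_Ne1 : reduced (-1, 0) 0
  | reduced_S p t : reduced p t -> t != 1%N -> reduced (Smap p) 1
  | reduced_U p t k : reduced p t -> (t <= 1)%N -> (0 < k < 5)%N ->
      reduced (iter k Umap p) k.+1.

Definition hecke_orbit (p : R * R) := exists t, reduced p t.

Lemma reduced_negp p t : reduced p t -> reduced (negp p) t.
Proof.
elim=> {p t} [||p t _ rp t1|p t k _ rp t1 k5].
- by rewrite /negp /= oppr0; exact: reduced_Ne1.
- by rewrite /negp /= oppr0 opprK; exact: reduced_e1.
- by rewrite -Smap_negp; exact: reduced_S rp t1.
- by rewrite -iter_Umap_negp; exact: reduced_U rp t1 k5.
Qed.

Lemma hecke_orbit_negp p : hecke_orbit p -> hecke_orbit (negp p).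
Proof. by case=> t /reduced_negp rp; exists t. Qed.

Lemma hecke_orbit_Smap p : hecke_orbit p -> hecke_orbit (Smap p).
Proof.
case=> t rp; have [t1|t_neq1] := eqVneq t 1%N; last by exists 1%N; exact: reduced_S rp t_neq1.
case: rp t1 => [||q t' rq _ _|q t' k _ _ /andP[k_gt0 _] [k0]] //; last by rewrite k0 in k_gt0.
(* [Smap (Smap q)] computes to [negp q]. *)
by apply: hecke_orbit_negp; exists t'.
Qed.

Lemma hecke_orbit_Umap p : hecke_orbit p -> hecke_orbit (Umap p).
Proof.
case=> t rp; have [t_le1|t_gt1] := leqP t 1.
  by exists 2%N; exact: (@reduced_U p t 1 rp t_le1).
case: rp t_gt1 => [||//|q t' k rq t'_le1 /andP[k_gt0 k_lt5] _] //.
have [k4|k_neq4] := eqVneq k 4%N.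
  by rewrite -iterS k4 iter5_Umap; apply: hecke_orbit_negp; exists t'.
by exists k.+2; rewrite -iterS; apply: reduced_U rq t'_le1 _; lia.
Qed.

Definition zero_or_ge1 (z : R) := z = 0 \/ 1 <= z.

Definition quad1 (p : R * R) := zero_or_ge1 p.1 /\ zero_or_ge1 p.2.
Definition quad2 (p : R * R) := zero_or_ge1 (- p.1) /\ zero_or_ge1 p.2.
Definition up_to_sign (P : R * R -> Prop) (p : R * R) := P p \/ P (negp p).

Lemma zero_or_ge1_lincomb (a b x y : R) : 1 <= a -> 1 <= b ->
  zero_or_ge1 x -> zero_or_ge1 y -> zero_or_ge1 (a * x + b * y).
Proof.
move=> a_ge1 b_ge1 [->|x_ge1] [->|y_ge1]; rewrite ?mulr0 ?addr0; first by left.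
all: by right; nra.
Qed.

Lemma iter_Umap_quad1 k p : (0 < k < 5)%N -> quad1 p -> quad2 (iter k Umap p).
Proof.
case: p => x y /andP[k_gt0 k_lt5] [/= zx zy].
have lin a b : 1 <= a -> 1 <= b -> zero_or_ge1 (a * x + b * y).
  by move=> a_ge1 b_ge1; exact: zero_or_ge1_lincomb.
have lin1 := lin 1 phi (lexx 1) phi_ge1; have lin2 := lin phi phi phi_ge1 phi_ge1.
have lin3 := lin phi 1 phi_ge1 (lexx 1); rewrite mul1r in lin1; rewrite mul1r in lin3.
have [U1 U2 U3 U4] := iter_Umap x y.
by case: k k_gt0 k_lt5 => [|[|[|[|[|k]]]]] // _ _; rewrite ?U1 ?U2 ?U3 ?U4 /quad2 /= opprK.
Qed.

Lemma Smap_quad2 p : quad2 p -> quad1 (negp (Smap p)).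
Proof. by case: p => x y [zx zy]; rewrite /quad1 /= opprK. Qed.

Lemma reduced_quad p t : reduced p t ->
  ((t <= 1)%N -> up_to_sign quad1 p) /\ (t != 1%N -> up_to_sign quad2 p).
Proof.
have e1_quad1 : quad1 (1, 0) by split; [right|left].
have e1_quad2 : quad2 (negp (1, 0)) by rewrite /quad2 /= opprK oppr0; split; [right|left].
elim=> {p t} [||p t _ [_ IH] t_neq1|p t k _ [IH _] t_le1 k_bd].
- by split=> _; [left|right].
- have Ne1 : negp (1, 0) = (-1, 0) by rewrite /negp /= oppr0.
  by rewrite -Ne1; split=> _; [right; rewrite negpK|left].
- split=> // _; case: (IH t_neq1) => [/Smap_quad2 q|/Smap_quad2 q]; first by right.
  by left; rewrite Smap_negp negpK in q.
- split=> [|_]; first by case: k k_bd.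
  case: (IH t_le1) => q; [left|right]; first exact: iter_Umap_quad1.
  by rewrite -iter_Umap_negp; exact: iter_Umap_quad1.
Qed.

Lemma hecke_orbit_snd p : hecke_orbit p -> zero_or_ge1 `|p.2|.
Proof.
have snd q : zero_or_ge1 q.2 -> zero_or_ge1 `|q.2|.
  by case=> [->|q_ge1]; [left; rewrite normr0|right; rewrite ger0_norm // (le_trans ler01)].
have sign P : (forall q, P q -> zero_or_ge1 q.2) -> up_to_sign P p -> zero_or_ge1 `|p.2|.
  by move=> Psnd [/Psnd/snd //|/Psnd/snd]; rewrite /= normrN.
case=> t /reduced_quad[q1 q2]; have [/q1|/q2] : (t <= 1)%N \/ t != 1%N by lia.
all: by apply: sign => q [].
Qed.

Definition Umap_inv (p : R * R) : R * R := negp (iter 4 Umap p).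

Lemma hecke_orbit_Umap_inv p : hecke_orbit p -> hecke_orbit (Umap_inv p).
Proof. by move=> op; apply/hecke_orbit_negp; do 4 apply: hecke_orbit_Umap. Qed.

Definition shear (r : R) (p : R * R) : R * R := (p.1 + r * p.2, p.2).

Lemma shear_add r s p : shear (r + s) p = shear r (shear s p).
Proof. by rewrite /shear /=; congr pair; ring. Qed.

Lemma hecke_orbit_shear_phi p :
  hecke_orbit p -> hecke_orbit (shear phi p) /\ hecke_orbit (shear (- phi) p).
Proof.
case: p => x y op; split.
- have -> : shear phi (x, y) = negp (Smap (Umap (x, y))) by rewrite /negp /= !opprK.
  exact/hecke_orbit_negp/hecke_orbit_Smap/hecke_orbit_Umap.
- have -> : shear (- phi) (x, y) = Umap_inv (Smap (x, y)).
    have [_ _ _ U4] := iter_Umap (- y) x.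
    by rewrite /Umap_inv U4 /negp /shear /=; congr pair; ring.
  exact/hecke_orbit_Umap_inv/hecke_orbit_Smap.
Qed.

Lemma hecke_orbit_shear (n : int) p :
  hecke_orbit p -> hecke_orbit (shear (n%:~R * phi) p).
Proof.
have iter_shear s (m : nat) q : (forall q, hecke_orbit q -> hecke_orbit (shear s q)) ->
    hecke_orbit q -> hecke_orbit (shear (m%:R * s) q).
  move=> Hs oq; elim: m => [|m IH]; first by case: q oq => x y; rewrite /shear /= !mul0r addr0.
  by rewrite mulrS mulrDl mul1r shear_add; apply: Hs.
case: n => m op.
- by apply: iter_shear op => q /hecke_orbit_shear_phi[].
- by rewrite NegzE mulrNz mulNr -mulrN; apply: iter_shear op => q /hecke_orbit_shear_phi[].
Qed.

Definition det2 (p q : R * R) := p.1 * q.2 - p.2 * q.1.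

Lemma det2_Smap p q : det2 (Smap p) q = det2 p (negp (Smap q)).
Proof. by rewrite /det2 /=; ring. Qed.

Lemma det2_iter_Umap k p q : det2 (iter k Umap p) q = det2 p (iter k Umap_inv q).
Proof.
elim: k q => [//|k IH] q; rewrite iterS iterSr -IH.
case: (iter k Umap p) (q) => x y [a b]; have [_ _ _ U4] := iter_Umap a b.
by rewrite /Umap_inv U4 /det2 /=; ring.
Qed.

Lemma hecke_orbit_det2 p q :
  hecke_orbit p -> hecke_orbit q -> zero_or_ge1 `|det2 p q|.
Proof.
case=> t rp; elim: rp q => {p t} [||p t _ IH _|p t k _ IH _ _] q oq.
- by rewrite /det2 /= mul1r mul0r subr0; exact: hecke_orbit_snd.
- by rewrite /det2 /= mulN1r mul0r subr0 normrN; exact: hecke_orbit_snd.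
- by rewrite det2_Smap; apply/IH/hecke_orbit_negp/hecke_orbit_Smap.
- rewrite det2_iter_Umap; apply: IH.
  by elim: k => //= k; exact: hecke_orbit_Umap_inv.
Qed.

Definition colpair (v : 'cV[R]_2) : R * R := (v 0 0, v 1 0).

Lemma mx2_mulmx a b c e a' b' c' e' :
  mx2 a b c e *m mx2 a' b' c' e' =
  mx2 (a * a' + b * c') (a * b' + b * e') (c * a' + e * c') (c * b' + e * e').
Proof.
apply/matrixP => i j; rewrite !mxE !big_ord_recl !big_ord0 !mxE.
by rewrite addr0; case: i => [[|[|i]] Hi] //; case: j => [[|[|j]] Hj].
Qed.

Lemma colpair_mx2_mul a b c e v :
  colpair (mx2 a b c e *m v) = (a * v 0 0 + b * v 1 0, c * v 0 0 + e * v 1 0).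
Proof.
have [E0 E1] : ord0 = 0 :> 'I_2 /\ lift ord0 ord0 = 1 :> 'I_2 by split; apply/val_inj.
by rewrite /colpair !mxE !big_ord_recl !big_ord0 !mxE /= !addr0 E1 E0.
Qed.

Lemma invmx_mx2 a b c e : a * e - b * c = 1 ->
  invmx (mx2 a b c e) = mx2 e (- b) (- c) a.
Proof.
move=> det1; have inv : mx2 a b c e *m mx2 e (- b) (- c) a = 1%:M.
  rewrite mx2_mulmx; apply/matrixP => i j; rewrite !mxE.
  by case: i => [[|[|i]] Hi] //; case: j => [[|[|j]] Hj] //=; rewrite -det1; ring.
have [unit_mx _] := mulmx1_unit inv.
by rewrite -[RHS]mul1mx -(mulVmx unit_mx) -mulmxA inv mulmx1.
Qed.

Definition orbit_stable (M : 'M[R]_2) :=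
  forall v, hecke_orbit (colpair v) -> hecke_orbit (colpair (M *m v)).

Lemma orbit_stable_mul A B : orbit_stable A -> orbit_stable B -> orbit_stable (A *m B).
Proof. by move=> sA sB v /sB /sA; rewrite mulmxA. Qed.

Lemma orbit_stable_mx2 a b c e :
  (forall x y, hecke_orbit (x, y) -> hecke_orbit (a * x + b * y, c * x + e * y)) ->
  orbit_stable (mx2 a b c e).
Proof. by move=> ab v; rewrite colpair_mx2_mul; exact: ab. Qed.

Definition Smx : 'M[R]_2 := mx2 0 (-1) 1 0.
Definition Sinv : 'M[R]_2 := mx2 0 1 (-1) 0.
Definition Tmx : 'M[R]_2 := mx2 1 phi 0 1.
Definition Tinv : 'M[R]_2 := mx2 1 (- phi) 0 1.

Lemma orbit_stable_hecke :
  [/\ orbit_stable Smx, orbit_stable Sinv, orbit_stable Tmx & orbit_stable Tinv].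
Proof.
split; apply: orbit_stable_mx2 => x y.
- move=> /hecke_orbit_Smap; congr hecke_orbit.
  by rewrite /Smap /=; congr pair; ring.
- move=> /hecke_orbit_Smap/hecke_orbit_negp; congr hecke_orbit.
  by rewrite /Smap /negp /=; congr pair; ring.
- move=> /hecke_orbit_shear_phi[+ _]; congr hecke_orbit.
  by rewrite /shear /=; congr pair; ring.
- move=> /hecke_orbit_shear_phi[_ +]; congr hecke_orbit.
  by rewrite /shear /=; congr pair; ring.
Qed.

Lemma sigma_mx2 : [/\ sigma0 = mx2 1 phi 0 1, sigma1 = mx2 phi phi 1 phi,
  sigma2 = mx2 phi 1 phi phi & sigma3 = mx2 1 0 phi 1].
Proof. by []. Qed.

Lemma sigma_words : [/\ sigma0 = Tmx, sigma1 = Tmx *m Smx *m Tmx,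
  sigma3 = Sinv *m Tinv *m Smx & sigma2 = sigma3 *m Sinv *m sigma3].
Proof.
have [-> -> -> ->] := sigma_mx2.
by rewrite /Tmx /Smx /Sinv /Tinv; split; rewrite // !mx2_mulmx; congr mx2; ring: phi_sqr.
Qed.

Lemma invmx_sigma_words : [/\ invmx sigma0 = Tinv,
  invmx sigma1 = Tinv *m Sinv *m Tinv, invmx sigma3 = Sinv *m Tmx *m Smx
  & invmx sigma2 = invmx sigma3 *m Smx *m invmx sigma3].
Proof.
have [-> -> -> ->] := sigma_mx2.
rewrite !invmx_mx2; try by ring: phi_sqr.
by rewrite /Tmx /Smx /Sinv /Tinv oppr0; split; rewrite // !mx2_mulmx; congr mx2; ring: phi_sqr.
Qed.

Lemma orbit_stable_generator s :
  is_generator s -> orbit_stable s /\ orbit_stable (invmx s).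
Proof.
have [sS sSi sT sTi] := orbit_stable_hecke.
have [w0 w1 w3 w2] := sigma_words; have [i0 i1 i3 i2] := invmx_sigma_words.
have [s3 s3i] : orbit_stable sigma3 /\ orbit_stable (invmx sigma3).
  by rewrite i3 w3; split; do ?apply: orbit_stable_mul.
case=> [->|[->|[->|->]]]; rewrite ?i0 ?i1 ?i2 ?w0 ?w1 ?w2.
all: by split; do ?apply: orbit_stable_mul.
Qed.

Lemma inS_hecke_orbit v : inS v -> hecke_orbit (colpair v).
Proof.
case=> g [Gg ->]; elim: Gg => [|s {}g /orbit_stable_generator[sg _] _ IH
                               |s {}g /orbit_stable_generator[_ sg] _ IH].
- by rewrite mul1mx /colpair !mxE; exists 0%N; exact: reduced_e1.
all: by rewrite -mulmxA; exact: sg.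
Qed.

Lemma dE k : d k =
  cv2 ((k * (k + 1))%N%:R + ((2 * k ^ 2 + k)%N%:R - 2) * phi) (phi ^+ 2).
Proof. by []. Qed.

Lemma det2_scaled_d_shear c k l (n : int) :
  det2 (colpair (c *: d k)) (shear (n%:~R * phi) (colpair (c *: d l))) =
  c ^+ 2 * phi ^+ 3 *
    (((k * (k + 1))%N%:R - (l * (l + 1))%N%:R - n%:~R) * phi ^+ 2 - (k%:R - l%:R)).
Proof.
rewrite !dE /colpair /shear /det2 !mxE /= !natrD !natrM.
ring: phi_sqr.
Qed.

Definition frac (x : R) : R := x - (Num.floor x)%:~R.

Lemma frac_itv x : 0 <= frac x < 1.
Proof.
by have /andP[] := floor_itv x; rewrite /frac intrD => lo hi; apply/andP; split; lra.
Qed.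

Lemma scaled_d_separated c k l : 0 < c ->
  hecke_orbit (colpair (c *: d k)) -> hecke_orbit (colpair (c *: d l)) ->
  k = l \/ 1 <= c ^+ 2 * phi ^+ 5 * `|frac (k%:R / phi ^+ 2) - frac (l%:R / phi ^+ 2)|.
Proof.
move=> c_gt0 ok ol; have phi_neq0 := lt0r_neq0 phi_gt0.
set N := Num.floor (k%:R / phi ^+ 2) - Num.floor (l%:R / phi ^+ 2).
(* Shearing by [n] leaves [N], the difference of the floors, in the determinant. *)
set n := (k * (k + 1))%N%:Z - (l * (l + 1))%N%:Z - N.
have := hecke_orbit_det2 ok (hecke_orbit_shear n ol); rewrite det2_scaled_d_shear.
have -> : (k * (k + 1))%N%:R - (l * (l + 1))%N%:R - n%:~R = N%:~R :> R.
  by rewrite /n !rmorphB /=; ring.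
case=> [det0|det_ge1]; [left|right].
- move/normr0_eq0/eqP: det0.
  have cphi_gt0 : 0 < c ^+ 2 * phi ^+ 3 by rewrite mulr_gt0 ?exprn_gt0 ?phi_gt0.
  rewrite mulf_eq0 (gt_eqF cphi_gt0) /= subr_eq0 => /eqP N_phi.
  have /int_mul_phi_sqr_eq[_ /eqP] : N%:~R * phi ^+ 2 = (k%:Z - l%:Z)%:~R.
    by rewrite N_phi rmorphB.
  by rewrite subr_eq0 eqz_nat => /eqP.
- have cphi5_ge0 : 0 <= c ^+ 2 * phi ^+ 5 by rewrite mulr_ge0 ?exprn_ge0 ?ltW ?phi_gt0.
  have E : c ^+ 2 * phi ^+ 3 * (N%:~R * phi ^+ 2 - (k%:R - l%:R)) =
      - (c ^+ 2 * phi ^+ 5 * (frac (k%:R / phi ^+ 2) - frac (l%:R / phi ^+ 2))).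
    by rewrite /frac /N rmorphB /=; field.
  by rewrite E normrN normrM (ger0_norm cphi5_ge0) in det_ge1.
Qed.

Lemma bounded_of_injective (K : nat -> Prop) (g : nat -> nat) (B : nat) :
  (forall k, K k -> (g k < B)%N) ->
  (forall k l, K k -> K l -> g k = g l -> k = l) ->
  exists N, forall k, K k -> (k <= N)%N.
Proof.
elim: B K => [|B IH] K g_lt g_inj; first by exists 0%N => k /g_lt.
have [[k0 [Kk0 gk0]]|no_B] := classic (exists k0, K k0 /\ g k0 = B).
- have [N leN] : exists N, forall k, K k /\ k <> k0 -> (k <= N)%N.
    apply: IH => [k [Kk k_neq0]|k l [Kk _] [Kl _]]; last exact: g_inj.
    have := g_lt k Kk; rewrite ltnS leq_eqVlt => /orP[/eqP gkB|//].
    by case: k_neq0; apply: g_inj => //; rewrite gkB gk0.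
  exists (maxn N k0) => k Kk; have [->|k_neq0] := eqVneq k k0; first exact: leq_maxr.
  by apply: leq_trans (leq_maxl N k0); apply: leN; split=> //; exact/eqP.
- apply: IH g_inj => k Kk; have := g_lt k Kk; rewrite ltnS leq_eqVlt => /orP[/eqP gkB|//].
  by case: no_B; exists k.
Qed.

Lemma bounded_of_separated (K : nat -> Prop) (f : nat -> R) (W : R) :
  (forall k, K k -> 0 <= f k < 1) ->
  (forall k l, K k -> K l -> k = l \/ 1 <= W * `|f k - f l|) ->
  exists N, forall k, K k -> (k <= N)%N.
Proof.
move=> f_itv f_sep; set B := (Num.truncn W).+1.
have W_lt_B : W < B%:R := truncnS_gt W.
have fB_ge0 k : K k -> 0 <= f k * B%:R by move=> /f_itv /andP[f_ge0 _]; rewrite mulr_ge0.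
apply: (@bounded_of_injective K (fun k => Num.truncn (f k * B%:R)) B).
  move=> k Kk; rewrite truncn_lt_nat ?fB_ge0 //.
  by have /andP[_ f_lt1] := f_itv k Kk; rewrite gtr_pMl ?ltr0Sn.
move=> k l Kk Kl eq_bin; have [//|sep] := f_sep k l Kk Kl; exfalso.
have /andP[lo_k hi_k] := truncn_itv (fB_ge0 k Kk).
have /andP[lo_l hi_l] := truncn_itv (fB_ge0 l Kl).
rewrite eq_bin in lo_k hi_k.
have : `|(f k - f l) * B%:R| < 1 by rewrite mulrBl ltr_norml; apply/andP; split; lra.
rewrite normrM (ger0_norm (ler0n _ _)).
have := ler_wpM2r (normr_ge0 (f k - f l)) (ltW W_lt_B).
rewrite [B%:R * _]mulrC; lra.
Qed.

Theorem proposition3p4 (m : int) :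
  exists N : nat, forall k : nat,
    (1 < k)%N -> inS ((phi ^ (- m)) *: d k) -> (k <= N)%N.
Proof.
set c := phi ^ (- m).
have c_gt0 : 0 < c by rewrite exprz_gt0 // phi_gt0.
have [N leN] := @bounded_of_separated (fun k => inS (c *: d k))
  (fun k => frac (k%:R / phi ^+ 2)) (c ^+ 2 * phi ^+ 5) (fun k _ => frac_itv _)
  (fun k l Sk Sl => scaled_d_separated c_gt0 (inS_hecke_orbit Sk) (inS_hecke_orbit Sl)).
by exists N => k _ /leN.
Qed.
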